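(* Let $J\subseteq S$. For any $w\in\mathfrak{S}_n^J$ there is a unique minimal $(J,132)$-avoiding permutation $w'\in\mathfrak{S}_n^J$ with $w\le_S w'$; that is, $w'$ is $(J,132)$-avoiding, $w\le_S w'$, and $w'\le_S v$ for every $(J,132)$-avoiding $v\in\mathfrak{S}_n^J$ with $w\le_S v$.
   Context: $\mathfrak{S}_n$ is the symmetric group on $[n]$, $s_i=(i,i+1)$, $S=\{s_1,\dots,s_{n-1}\}$, one-line notation $w=w_1\cdots w_n$, $\mathrm{inv}(w)=\{(i,j):i<j,\ w_i>w_j\}$, weak order $u\le_S v\iff\mathrm{inv}(u)\subseteq\mathrm{inv}(v)$. For $J\subseteq S$, $\mathfrak{S}_n^J$ is the set of $w$ with $w_i<w_{i+1}$ whenever $s_i\in J$. Writing $J=S\setminus\{s_{j_1},\dots,s_{j_r}\}$ with $j_1<\dots<j_r$, the $J$-regions are $\{1,\dots,j_1\},\{j_1+1,\dots,j_2\},\dots,\{j_r+1,\dots,n\}$. An element $w\in\mathfrak{S}_n^J$ has a $(J,132)$-pattern if there are indices $i<j<k$ in pairwise different $J$-regions with $w_i<w_k<w_j$ and $w_k=w_i+1$; otherwise it is $(J,132)$-avoiding. *)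

From mathcomp Require Import all_boot all_order all_fingroup.
Set Implicit Arguments. Unset Strict Implicit. Unset Printing Implicit Defensive.

(* Conventions (0-based): the symmetric group S_n is 'S_n = {perm 'I_n};
   positions and values are 0,...,n-1 (the paper's i corresponds to i-1).
   A simple reflection s_{k+1} = (k+1,k+2) (1-based) is encoded by
   k : 'I_(n.-1), i.e. it swaps 0-based positions k and k+1.
   Hence J subseteq S is a set J : {set 'I_(n.-1)}. *)

Definition inv_set n (w : 'S_n) : {set 'I_n * 'I_n} :=
  [set p : 'I_n * 'I_n | (p.1 < p.2) && (w p.2 < w p.1)].

Definition weak_le n (u v : 'S_n) : bool := inv_set u \subset inv_set v.

Definition in_SJ n (J : {set 'I_(n.-1)}) (w : 'S_n) : bool :=
  [forall k : 'I_(n.-1), (k \in J) ==>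
     [forall a : 'I_n, forall b : 'I_n,
        ((a : nat) == k) && ((b : nat) == k.+1) ==> (w a < w b)]].

Definition same_region n (J : {set 'I_(n.-1)}) (a b : nat) : bool :=
  [forall k : 'I_(n.-1), ((minn a b <= k) && (k < maxn a b)) ==> (k \in J)].

Definition has_J132 n (J : {set 'I_(n.-1)}) (w : 'S_n) : bool :=
  [exists i : 'I_n, exists j : 'I_n, exists k : 'I_n,
     [&& i < j, j < k,
         ~~ same_region J i j, ~~ same_region J j k, ~~ same_region J i k,
         w i < w k, w k < w j & (w k : nat) == (w i).+1]].

Definition J132_avoiding n (J : {set 'I_(n.-1)}) (w : 'S_n) : bool :=
  ~~ has_J132 J w.

From mathcomp Require Import all_boot all_order all_fingroup zify.
Set Implicit Arguments. Unset Strict Implicit. Unset Printing Implicit Defensive.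

(* If w contains a (J,132) occurrence (i,j,k), exchanging the consecutive
   values w_i < w_k adds exactly the inversion (i,k) and keeps w in S_n^J.
   Every (J,132)-avoiding v above w must already invert (i,k): otherwise take
   p <= i with v_p < v_k maximal and r the position of the value v_p + 1; as
   w_k = w_i + 1 leaves no room for r strictly between i and k, r >= k, and
   (p,j,r) is a (J,132) occurrence in v.  Repeating the exchange therefore
   reaches the least avoiding element above w, and the weak order is
   antisymmetric. *)

Section InversionSets.

Variable n : nat.
Implicit Types (u v w : 'S_n) (p q r i k : 'I_n).

Lemma card_ord_lt m : m <= n -> #|[pred x : 'I_n | x < m]| = m.
Proof.
by move=> le_mn; rewrite -sum1_card (big_ord_narrow le_mn) sum1_card card_ord.
Qed.

Lemma perm_val_card u p : (u p : nat) = #|[pred q | u q < u p]|.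
Proof.
rewrite -{1}(card_ord_lt (ltnW (ltn_ord (u p)))) -[RHS](card_image (@perm_inj _ u)).
apply: eq_card => x; rewrite inE; apply/idP/imageP => [lt_x | [y _ ->] //].
by exists ((u^-1)%g x); rewrite ?inE permKV.
Qed.

Lemma perm_ltn_notin_inv_set u p q :
  p < q -> (u p < u q) = ((p, q) \notin inv_set u).
Proof.
move=> lt_pq; rewrite inE /= lt_pq /= -leqNgt ltn_neqAle.
suff -> : (u p : nat) != u q by [].
by apply: contraTneq lt_pq => /val_inj /perm_inj ->; rewrite ltnn.
Qed.

Lemma inv_set_inj : injective (@inv_set n).
Proof.
move=> u v inv_uv; apply/permP => p; apply: val_inj.
rewrite /= (perm_val_card u) (perm_val_card v); apply: eq_card => q; rewrite !inE.
case: (ltngtP q p) => [lt_qp | lt_pq | /val_inj ->]; last by rewrite !ltnn.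
  by rewrite !perm_ltn_notin_inv_set // inv_uv.
by have := congr1 (fun S : {set _} => (p, q) \in S) inv_uv; rewrite !inE /= lt_pq.
Qed.

Lemma weak_le_anti u v : weak_le u v -> weak_le v u -> u = v.
Proof.
by move=> le_uv le_vu; apply: inv_set_inj; apply/eqP; rewrite eqEsubset; apply/andP.
Qed.

Lemma weak_le_inversion u v p q : weak_le u v -> p < q -> u q < u p -> v q < v p.
Proof.
move=> /subsetP le_uv lt_pq lt_u.
have /le_uv : (p, q) \in inv_set u by rewrite inE /= lt_pq.
by rewrite inE /= => /andP [].
Qed.

Lemma weak_le_ascent u v p q : weak_le u v -> p < q -> v p < v q -> u p < u q.
Proof.
move=> /subsetP le_uv lt_pq; rewrite !perm_ltn_notin_inv_set //.
by apply: contra => /le_uv.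
Qed.

Lemma tperm_succ_ltn (a b x y : 'I_n) :
  (b : nat) = a.+1 -> (x, y) != (a, b) -> (x, y) != (b, a) ->
  (tperm a b x < tperm a b y) = (x < y).
Proof.
move=> b_a; have val_neq (z c : 'I_n) : z <> c -> (z : nat) <> c by move=> + /val_inj.
case: tpermP => [-> | -> | /val_neq ? /val_neq ?];
case: tpermP => [-> | -> | /val_neq ? /val_neq ?]; rewrite ?eqxx ?ltnn //; lia.
Qed.

Lemma inv_set_mul_tperm_succ w i k :
  i < k -> (w k : nat) = (w i).+1 -> inv_set (w * tperm (w i) (w k)) = (i, k) |: inv_set w.
Proof.
move=> lt_ik w_ki; apply/setP => -[p q]; rewrite !inE /= !permM.
have [[-> ->] | ne_pq] /= := eqVneq (p, q) (i, k).
  by rewrite tpermL tpermR lt_ik w_ki ltnSn.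
case: ltnP => //= lt_pq; rewrite tperm_succ_ltn //.
  apply: contraTneq lt_pq => -[/perm_inj -> /perm_inj ->].
  by rewrite -leqNgt ltnW.
by apply: contra ne_pq => /eqP [/perm_inj -> /perm_inj ->].
Qed.

Lemma succ_value_straddle v i k :
  i < k -> v i < v k ->
  exists p r, [/\ p <= i < r, v i <= v p, v r <= v k & (v r : nat) = (v p).+1].
Proof.
move=> lt_ik lt_vik; pose P p := (p <= i) && (v p < v k).
have Pi : P i by rewrite /P leqnn.
have [p /andP [le_pi lt_vpk] p_max] := arg_maxnP (fun p => nat_of_ord (v p)) Pi.
have lt_succ : (v p).+1 < n := leq_ltn_trans lt_vpk (ltn_ord _).
pose r := (v^-1)%g (Ordinal lt_succ).
have v_r : (v r : nat) = (v p).+1 by rewrite permKV.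
exists p, r; split; [| exact: p_max Pi | by rewrite v_r | by []].
rewrite le_pi ltnNge; apply/negP => le_ri.
have lt_vrk : v r < v k.
  have ne_rk : r != k by apply: contraTneq lt_ik => <-; rewrite -leqNgt.
  by rewrite ltn_neqAle (inj_eq val_inj) (inj_eq perm_inj) ne_rk v_r.
by have := p_max r; rewrite /P le_ri lt_vrk v_r /= ltnn => /(_ isT).
Qed.

End InversionSets.

Section J132.

Variables (n : nat) (J : {set 'I_n.-1}).
Implicit Types (v w : 'S_n) (i j k : 'I_n).

Lemma in_SJP w :
  reflect (forall (s : 'I_n.-1) (a b : 'I_n),
             s \in J -> a = s :> nat -> b = s.+1 :> nat -> w a < w b)
          (in_SJ J w).
Proof.
apply: (iffP forallP) => [Jw s a b sJ a_s b_s | Jw s].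
  move: (Jw s); rewrite sJ /= => /forallP /(_ a) /forallP /(_ b).
  by rewrite a_s b_s !eqxx.
apply/implyP => sJ; apply/forallP => a; apply/forallP => b.
by apply/implyP => /andP [/eqP a_s /eqP b_s]; exact: Jw sJ a_s b_s.
Qed.

Lemma in_SJ_mul_tperm_succ w i k :
  i.+1 < k -> (w k : nat) = (w i).+1 -> in_SJ J w -> in_SJ J (w * tperm (w i) (w k)).
Proof.
move=> lt_ik w_ki /in_SJP Jw; apply/in_SJP => s a b sJ a_s b_s.
have lt_ab : a < b by rewrite a_s b_s.
rewrite perm_ltn_notin_inv_set // inv_set_mul_tperm_succ ?(ltnW lt_ik) //.
rewrite in_setU1 negb_or -perm_ltn_notin_inv_set ?(Jw s) // andbT.
by apply: contraTneq lt_ik => -[<- <-]; rewrite a_s b_s ltnn.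
Qed.

Lemma same_regionN_widen (x y x' y' : nat) :
  x' <= x -> y <= y' -> x <= y -> ~~ same_region J x y -> ~~ same_region J x' y'.
Proof.
move=> le_x le_y le_xy /forallPn [s]; rewrite negb_imply => /andP [/andP [s_ge s_lt] sNJ].
apply/forallPn; exists s; rewrite negb_imply sNJ andbT.
by apply/andP; split; lia.
Qed.

Lemma J132_avoiding_above_inverts w v i j k :
  i < j -> j < k -> ~~ same_region J i j -> ~~ same_region J j k ->
  w k < w j -> (w k : nat) = (w i).+1 ->
  weak_le w v -> J132_avoiding J v -> v k < v i.
Proof.
move=> lt_ij lt_jk Rij Rjk lt_wkj w_ki le_wv; apply: contraTT => ge_vik.
have lt_ik := ltn_trans lt_ij lt_jk.
have lt_vik : v i < v k.
  rewrite ltn_neqAle leqNgt ge_vik andbT (inj_eq val_inj) (inj_eq perm_inj).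
  by apply: contraTneq lt_ik => ->; rewrite ltnn.
have [p [r [/andP [le_pi lt_ir] le_vip le_vrk v_r]]] := succ_value_straddle lt_ik lt_vik.
have le_kr : k <= r.
  rewrite leqNgt; apply/negP => lt_rk.
  have lt_vrk : v r < v k.
    rewrite ltn_neqAle le_vrk andbT (inj_eq val_inj) (inj_eq perm_inj).
    by apply: contraTneq lt_rk => ->; rewrite ltnn.
  have := weak_le_ascent le_wv lt_rk lt_vrk.
  have lt_vir : v i < v r by rewrite v_r ltnS.
  have := weak_le_ascent le_wv lt_ir lt_vir.
  lia.
have lt_vkj := weak_le_inversion le_wv lt_jk lt_wkj.
rewrite negbK; apply/existsP; exists p; apply/existsP; exists j; apply/existsP; exists r.
rewrite (same_regionN_widen le_pi (leqnn _) (ltnW lt_ij) Rij).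
rewrite (same_regionN_widen (leqnn _) le_kr (ltnW lt_jk) Rjk).
rewrite (same_regionN_widen le_pi (leq_trans (ltnW lt_jk) le_kr) (ltnW lt_ij) Rij).
rewrite v_r eqxx leqnn andbT /=; apply/and3P; split; lia.
Qed.

Definition least_J132_avoiding_above w w' : Prop :=
  [/\ in_SJ J w', J132_avoiding J w', weak_le w w' &
      forall v : 'S_n, in_SJ J v -> J132_avoiding J v -> weak_le w v -> weak_le w' v].

Lemma least_J132_avoiding_above_unique w u u' :
  least_J132_avoiding_above w u -> least_J132_avoiding_above w u' -> u = u'.
Proof.
move=> [Ju avu le_wu least_u] [Ju' avu' le_wu' least_u'].
by apply: weak_le_anti; [apply: least_u | apply: least_u'].
Qed.

Lemma least_J132_avoiding_above_swap w w' i j k :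
  i < j -> j < k -> ~~ same_region J i j -> ~~ same_region J j k ->
  w k < w j -> (w k : nat) = (w i).+1 ->
  least_J132_avoiding_above (w * tperm (w i) (w k)) w' ->
  least_J132_avoiding_above w w'.
Proof.
move=> lt_ij lt_jk Rij Rjk lt_wkj w_ki [Jw' avw' le_w' least_w'].
have lt_ik := ltn_trans lt_ij lt_jk.
have inv_swap := inv_set_mul_tperm_succ lt_ik w_ki.
have le_swap : weak_le w (w * tperm (w i) (w k)) by rewrite /weak_le inv_swap subsetU1.
split=> //; first exact: subset_trans le_swap le_w'.
move=> v Jv avv le_wv; apply: least_w' => //.
rewrite /weak_le inv_swap subUset -/(weak_le w v) le_wv andbT sub1set inE /= lt_ik /=.
exact: J132_avoiding_above_inverts lt_ij lt_jk Rij Rjk lt_wkj w_ki le_wv avv.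
Qed.

Lemma exists_least_J132_avoiding_above w :
  in_SJ J w -> exists w', least_J132_avoiding_above w w'.
Proof.
have [m] := ubnP #|~: inv_set w|; elim: m w => // m IH w lt_wm Jw.
have [avw | /negbNE /existsP [i /existsP [j /existsP [k]]]] := boolP (J132_avoiding J w).
  by exists w; split=> //; apply: subxx.
case/and5P=> lt_ij lt_jk Rij Rjk /and4P [_ _ lt_wkj /eqP w_ki].
have lt_ik := ltn_trans lt_ij lt_jk.
have [w' least_w'] : exists w', least_J132_avoiding_above (w * tperm (w i) (w k)) w'.
  apply: IH; last exact: in_SJ_mul_tperm_succ (leq_ltn_trans lt_ij lt_jk) w_ki Jw.
  rewrite -ltnS; apply: leq_trans lt_wm; rewrite ltnS; apply: proper_card; rewrite properC.
  rewrite inv_set_mul_tperm_succ // properE subsetU1 /=.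
  apply/subsetPn; exists (i, k); first exact: setU11.
  by rewrite inE /= lt_ik /= w_ki -leqNgt.
by exists w'; apply: (least_J132_avoiding_above_swap lt_ij lt_jk Rij Rjk lt_wkj w_ki).
Qed.

End J132.

Theorem lemma3p14 (n : nat) (J : {set 'I_(n.-1)}) (w : 'S_n) :
  in_SJ J w ->
  exists! w' : 'S_n,
    [/\ in_SJ J w', J132_avoiding J w', weak_le w w' &
        forall v : 'S_n, in_SJ J v -> J132_avoiding J v -> weak_le w v ->
          weak_le w' v].
Proof.
move=> Jw; have [w' least_w'] := exists_least_J132_avoiding_above Jw.
exists w'; split=> [|w'' least_w'']; first exact: least_w'.
exact: least_J132_avoiding_above_unique least_w' least_w''.
Qed.
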